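(* Let $\mathbb{M}$ be a flow monoid with idempotent addition, and let $h_1,h_2$ be flow graphs with the same node set $X$ whose edge functions are all continuous and distributive. Then $\mathsf{tf}(h_1)=\mathsf{tf}(h_2)$ if and only if full path replacement of $h_1$ by $h_2$ and full path replacement of $h_2$ by $h_1$ both hold.
   Context: A flow monoid is a commutative monoid $(\mathbb{M},+,0)$ such that $n\le m :\iff \exists o.\ m=n+o$ is a partial order in which every ascending chain $K$ has a least upper bound $\bigsqcup K$, and $n+\bigsqcup K=\bigsqcup(n+K)$. Addition is idempotent if $m+m=m$ for all $m$. A function is continuous if it commutes with least upper bounds of ascending chains, and distributive if $f(m+n)=f(m)+f(n)$ and $f(0)=0$. Infinite sums denote least upper bounds of finite partial sums; sums and $\le$ on functions are pointwise. A flow graph is $h=(X,E,\mathit{in})$ with $X\subseteq\mathbb{N}$ finite, $E:X\times\mathbb{N}\to$ continuous functions $\mathbb{M}\to\mathbb{M}$, $\mathit{in}:(\mathbb{N}\setminus X)\times X\to\mathbb{M}$; $\mathit{in}_x=\sum_{y\notin X}\mathit{in}(y,x)$; the flow is the least $\mathit{flow}:X\to\mathbb{M}$ with $\mathit{flow}(x)=\mathit{in}_x+\sum_{y\in X}E(y,x)(\mathit{flow}(y))$; outflow $\mathit{out}(x,y)=E(x,y)(\mathit{flow}(x))$ for $x\in X$, $y\notin X$. The transfer function $\mathsf{tf}(h)$ maps each inflow $\mathit{in}'$ to the outflow of $(X,E,\mathit{in}')$; $\mathsf{tf}(h_1)=\mathsf{tf}(h_2)$ means equality for all inflows. A path through $h$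 is $p=x_0\cdots x_nz$ with $x_i\in X$, $z\in\mathbb{N}\setminus X$; $\mathrm{Paths}_h(x\to(y,z))$ is the set of such paths with $x_0=x$, $x_n=y$, final element $z$; $E_p=E(x_n,z)\circ E(x_{n-1},x_n)\circ\cdots\circ E(x_0,x_1)$; for a set of paths $P$, $E_P=\sum_{q\in P}E_q$. Full path replacement of $h_1$ by $h_2$: for every $x\in X$, $y\in X$, $z\in\mathbb{N}\setminus X$ and every $p\in\mathrm{Paths}_{h_1}(x\to(y,z))$ there is $P\subseteq\mathrm{Paths}_{h_2}(x\to(y,z))$ with $E_p\le E_P$. *)

From Stdlib Require Import List.
Import ListNotations.
Set Implicit Arguments.

Section Order.
Variable M : Type.
Variable add : M -> M -> M.

Definition mle (n m : M) : Prop := exists o, m = add n o.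

Definition ascending (K : nat -> M) : Prop := forall i, mle (K i) (K (S i)).

Definition is_lub_set (S : M -> Prop) (l : M) : Prop :=
  (forall s, S s -> mle s l) /\ (forall u, (forall s, S s -> mle s u) -> mle l u).

Definition is_lub_chain (K : nat -> M) (l : M) : Prop :=
  is_lub_set (fun s => exists i, s = K i) l.

End Order.

Record flow_monoid (M : Type) : Type := {
  fm_add : M -> M -> M;
  fm_zero : M;
  fm_assoc : forall a b c, fm_add a (fm_add b c) = fm_add (fm_add a b) c;
  fm_comm : forall a b, fm_add a b = fm_add b a;
  fm_zero_l : forall a, fm_add fm_zero a = a;
  fm_antisym : forall a b, mle fm_add a b -> mle fm_add b a -> a = b;
  fm_chain_lub : forall K, ascending fm_add K -> exists l, is_lub_chain fm_add K l;
  fm_add_lub : forall n K l, ascending fm_add K -> is_lub_chain fm_add K l ->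
      is_lub_chain fm_add (fun i => fm_add n (K i)) (fm_add n l)
}.

Section FlowDefs.
Variable M : Type.
Variable FM : flow_monoid M.

Definition madd := fm_add FM.
Definition mzero := fm_zero FM.
Definition le := mle madd.

Definition idempotent_add : Prop := forall m, madd m m = m.

Definition continuous (f : M -> M) : Prop :=
  forall K l, ascending madd K -> is_lub_chain madd K l ->
    is_lub_chain madd (fun i => f (K i)) (f l).

Definition distributive (f : M -> M) : Prop :=
  (forall m n, f (madd m n) = madd (f m) (f n)) /\ f mzero = mzero.

Definition lsum (l : list M) : M := fold_right madd mzero l.

Definition is_sum {A : Type} (P : A -> Prop) (f : A -> M) (s : M) : Prop :=
  is_lub_set madd
    (fun t => exists L : list A, NoDup L /\ (forall a, In a L -> P a)
                              /\ t = lsum (map f L)) s.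

(* ---------- Flow graphs ----------
   A flow graph (X, E, in): X is a duplicate-free list of nodes (finite subset of nat),
   E x y the edge function (relevant for x in X), inf y x the inflow
   (relevant for y not in X, x in X). *)

Definition flow_eq (X : list nat) (E : nat -> nat -> M -> M) (inx : nat -> M)
  (fl : nat -> M) : Prop :=
  forall x, In x X -> fl x = madd (inx x) (lsum (map (fun y => E y x (fl y)) X)).

Definition is_flow (X : list nat) (E : nat -> nat -> M -> M) (inf : nat -> nat -> M)
  (fl : nat -> M) : Prop :=
  exists inx : nat -> M,
    (forall x, In x X -> is_sum (fun y => ~ In y X) (fun y => inf y x) (inx x)) /\
    flow_eq X E inx fl /\
    (forall g, flow_eq X E inx g -> forall x, In x X -> le (fl x) (g x)).

(* tf(h1) = tf(h2): for every inflow, the outflows out(x,y) = E x y (flow x),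
   x in X, y not in X, coincide *)
Definition tf_eq (X : list nat) (E1 E2 : nat -> nat -> M -> M) : Prop :=
  forall (inf : nat -> nat -> M) (fl1 fl2 : nat -> M),
    is_flow X E1 inf fl1 -> is_flow X E2 inf fl2 ->
    forall x y, In x X -> ~ In y X -> E1 x y (fl1 x) = E2 x y (fl2 x).

(* ---------- Paths ----------
   A path x0 x1 ... xn z is represented by its start x0, the list
   rest = [x1; ...; xn] and its final element z. *)
Definition is_path (X : list nat) (x : nat) (rest : list nat) (y z : nat) : Prop :=
  In x X /\ (forall v, In v rest -> In v X) /\ last (x :: rest) x = y /\ ~ In z X.

Fixpoint epath (E : nat -> nat -> M -> M) (x : nat) (rest : list nat) (z : nat)
  : M -> M :=
  match rest with
  | [] => E x z
  | x1 :: r => fun m => epath E x1 r z (E x x1 m)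
  end.

Definition full_path_replacement (X : list nat) (E1 E2 : nat -> nat -> M -> M) : Prop :=
  forall x y z rest, In x X -> In y X -> ~ In z X -> is_path X x rest y z ->
    exists P : list nat -> Prop,
      (forall r, P r -> is_path X x r y z) /\
      exists EP : M -> M,
        (forall m, is_sum P (fun r => epath E2 x r z m) (EP m)) /\
        (forall m, le (epath E1 x rest z m) (EP m)).

End FlowDefs.

(* The proof rests on a path characterisation of outflows.  Let [lfp] be the
   least flow for an inflow [inx].  Then:
   - every path contribution E_p(inx v), for a path v ... y z, is below the
     outflow E(y,z)(lfp y) (induction along the path, using that the flow
     equation makes E(v,w)(lfp v) a summand of lfp w);
   - conversely, the outflow is below every common upper bound of the path
     contributions: by Kleene's theorem lfp is the least upper bound of the
     iterates of the flow equation from 0, each iterate is a finite sum of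
     path contributions, and continuity of E(y,z) passes to the limit.
   Hence for the inflow injecting m at the single node x, the outflow at
   (y,z) is exactly the (infinite) sum of E_p(m) over all paths x ... y z.
   Equal transfer functions then give full path replacement, with P the set
   of all paths; and full path replacement of h1 by h2 bounds every path
   contribution of h1 by outflows of h2, so the outflows of h1 are below
   those of h2. *)

From Stdlib Require Import List Arith Lia ClassicalEpsilon.
Import ListNotations.

Section FlowMonoid.
Variable M : Type.
Variable FM : flow_monoid M.
Hypothesis Hidem : idempotent_add FM.

Local Notation "a +. b" := (madd FM a b) (at level 50, left associativity).
Local Notation "a <=. b" := (le FM a b) (at level 70).
Local Notation "0" := (mzero FM).
Local Notation asc K := (ascending (madd FM) K).
Local Notation lubc K l := (is_lub_chain (madd FM) K l).

Lemma addA a b c : a +. (b +. c) = a +. b +. c.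
Proof. apply (fm_assoc FM). Qed.

Lemma addC a b : a +. b = b +. a.
Proof. apply (fm_comm FM). Qed.

Lemma add0r a : a +. 0 = a.
Proof. rewrite addC; apply (fm_zero_l FM). Qed.

Lemma add_swap a b c d : (a +. b) +. (c +. d) = (a +. c) +. (b +. d).
Proof. rewrite <- addA, (addA b c d), (addC b c), <- (addA c b d), addA. reflexivity. Qed.

Lemma le_refl a : a <=. a.
Proof. exists 0. now rewrite add0r. Qed.

Lemma le_trans a b c : a <=. b -> b <=. c -> a <=. c.
Proof. intros [o ->] [o' ->]. exists (o +. o'). symmetry. apply addA. Qed.

Lemma le_0 a : 0 <=. a.
Proof. exists a. symmetry. apply (fm_zero_l FM). Qed.

Lemma le_addr a b : a <=. a +. b.
Proof. exists b. reflexivity. Qed.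

Lemma le_addl a b : b <=. a +. b.
Proof. exists a. apply addC. Qed.

Lemma le_add_mono a a' b b' : a <=. a' -> b <=. b' -> a +. b <=. a' +. b'.
Proof. intros [o ->] [o' ->]. exists (o +. o'). apply add_swap. Qed.

(* With idempotent addition, [a +. b] is the join of [a] and [b]. *)
Lemma le_join a b u : a <=. u -> b <=. u -> a +. b <=. u.
Proof.
  intros [o Ho] [o' Ho']. exists (o +. o').
  rewrite <- add_swap, <- Ho, <- Ho'. symmetry. apply Hidem.
Qed.

Lemma dist_mono f : distributive FM f -> forall a b, a <=. b -> f a <=. f b.
Proof. intros [Hd _] a b [o ->]. exists (f o). apply Hd. Qed.

Lemma lsum_ub {A : Type} (f : A -> M) L u :
  (forall w, In w L -> f w <=. u) -> lsum FM (map f L) <=. u.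
Proof.
  induction L as [|a L IH]; intros H; simpl.
  - apply le_0.
  - apply le_join; [apply H; now left | apply IH; intros; apply H; now right].
Qed.

Lemma lsum_summand {A : Type} (f : A -> M) L w :
  In w L -> f w <=. lsum FM (map f L).
Proof.
  induction L as [|a L IH]; intros H; [destruct H|]; simpl.
  destruct H as [<-|H]; [apply le_addr|].
  apply le_trans with (2 := le_addl _ _). auto.
Qed.

Lemma lsum_mono {A : Type} (f g : A -> M) L :
  (forall w, In w L -> f w <=. g w) -> lsum FM (map f L) <=. lsum FM (map g L).
Proof.
  induction L as [|a L IH]; intros H; simpl.
  - apply le_refl.
  - apply le_add_mono; [apply H; now left | apply IH; intros; apply H; now right].
Qed.

Lemma dist_lsum f : distributive FM f -> forall L, f (lsum FM L) = lsum FM (map f L).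
Proof.
  intros [Hadd H0]. induction L as [|a L IH]; simpl; [exact H0|].
  rewrite Hadd, IH. reflexivity.
Qed.

Lemma lub_unique S a b : is_lub_set (madd FM) S a -> is_lub_set (madd FM) S b -> a = b.
Proof. intros [Ua La] [Ub Lb]. apply (fm_antisym FM); [apply La | apply Lb]; assumption. Qed.

Lemma asc_mono K : asc K -> forall i j, i <= j -> K i <=. K j.
Proof.
  intros Ha i j H. induction H; [apply le_refl | eapply le_trans; [apply IHle | apply Ha]].
Qed.

Lemma lub_shift K l : asc K -> lubc K l -> lubc (fun n => K (S n)) l.
Proof.
  intros Ha [Hu Hl]. split.
  - intros s [i ->]. apply Hu. now exists (S i).
  - intros u Hu'. apply Hl. intros s [i ->].
    apply le_trans with (K (S i)); [apply Ha | apply Hu'; now exists i].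
Qed.

Lemma lub_const c : lubc (fun _ => c) c.
Proof. split; [intros s [i ->]; apply le_refl | intros u Hu; apply Hu; now exists 0%nat]. Qed.

Lemma lub_add a b A B : asc a -> asc b -> lubc a A -> lubc b B ->
  asc (fun i => a i +. b i) /\ lubc (fun i => a i +. b i) (A +. B).
Proof.
  intros Ha Hb HA HB. split; [intro i; apply le_add_mono; [apply Ha | apply Hb]|split].
  - intros s [i ->]. apply le_add_mono; [apply (proj1 HA) | apply (proj1 HB)]; now exists i.
  - intros u Hu.
    assert (Hrow : forall j, a j +. B <=. u).
    { intro j. apply (proj2 ((fm_add_lub FM) (a j) b B Hb HB)). intros s [i ->].
      apply le_trans with (a (max i j) +. b (max i j)).
      - apply le_add_mono; apply asc_mono; auto with arith.
      - apply Hu. now exists (max i j). }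
    rewrite addC. apply (proj2 ((fm_add_lub FM) B a A Ha HA)). intros s [i ->].
    rewrite addC. apply Hrow.
Qed.

Lemma lub_lsum {A : Type} (L : list A) (f : nat -> A -> M) (g : A -> M) :
  (forall w, In w L -> asc (fun n => f n w) /\ lubc (fun n => f n w) (g w)) ->
  asc (fun n => lsum FM (map (f n) L)) /\
  lubc (fun n => lsum FM (map (f n) L)) (lsum FM (map g L)).
Proof.
  induction L as [|a L IH]; intros H.
  - split; [intro; apply le_refl | apply (lub_const 0)].
  - destruct IH as [A1 B1]; [intros; apply H; now right|].
    destruct (H a (or_introl eq_refl)) as [A2 B2].
    exact (lub_add _ _ _ _ A2 A1 B2 B1).
Qed.

Section Flows.
Variable X : list nat.
Variable E : nat -> nat -> M -> M.
Hypothesis E_dist : forall a b, In a X -> distributive FM (E a b).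

Definition least_flow (inx fl : nat -> M) : Prop :=
  flow_eq FM X E inx fl /\
  forall g, flow_eq FM X E inx g -> forall x, In x X -> fl x <=. g x.

Lemma epath_dist z : forall rest v, In v X -> (forall w, In w rest -> In w X) ->
  distributive FM (epath E v rest z).
Proof.
  induction rest as [|x1 r IH]; intros v Hv Hr; simpl; [now apply E_dist|].
  destruct (IH x1 (Hr x1 (or_introl eq_refl)) (fun w H => Hr w (or_intror H))) as [I1 I2].
  destruct (E_dist v x1 Hv) as [D1 D2]. split.
  - intros m n. rewrite D1. apply I1.
  - rewrite D2. apply I2.
Qed.

Lemma last_indep (l : list nat) a d d' : last (a :: l) d = last (a :: l) d'.
Proof. revert a. induction l as [|b l IH]; intros a; [reflexivity | apply IH]. Qed.

Fixpoint iterate (inx : nat -> M) (n : nat) : nat -> M :=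
  match n with
  | O => fun _ => 0
  | S n' => fun x => inx x +. lsum FM (map (fun w => E w x (iterate inx n' w)) X)
  end.

Lemma flow_step_mono (inx a b : nat -> M) :
  (forall w, In w X -> a w <=. b w) -> forall x,
  inx x +. lsum FM (map (fun w => E w x (a w)) X) <=.
  inx x +. lsum FM (map (fun w => E w x (b w)) X).
Proof.
  intros H x. apply le_add_mono; [apply le_refl|].
  apply lsum_mono. intros w Hw. apply dist_mono; auto.
Qed.

Lemma iterate_asc inx x : asc (fun n => iterate inx n x).
Proof.
  intro n. revert x. induction n; intro x; [apply le_0|].
  exact (flow_step_mono inx (iterate inx n) (iterate inx (S n)) (fun w _ => IHn w) x).
Qed.

Lemma iterate_le_solution inx g : flow_eq FM X E inx g ->
  forall n y, In y X -> iterate inx n y <=. g y.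
Proof.
  intros Hg n. induction n; intros y Hy; [apply le_0|].
  rewrite (Hg y Hy). exact (flow_step_mono inx _ g IHn y).
Qed.

Hypothesis E_cont : forall a b, In a X -> continuous FM (E a b).

Lemma lub_iterates_solves inx fl :
  (forall x, lubc (fun n => iterate inx n x) (fl x)) -> flow_eq FM X E inx fl.
Proof.
  intros Hfl x Hx.
  apply (lub_unique (fun s => exists i, s = iterate inx (S i) x)).
  - exact (lub_shift _ _ (iterate_asc inx x) (Hfl x)).
  - destruct (lub_lsum X (fun n w => E w x (iterate inx n w)) (fun w => E w x (fl w)))
      as [A1 B1].
    { intros w Hw. split.
      - intro n. apply dist_mono; [now apply E_dist | apply iterate_asc].
      - apply E_cont; [exact Hw | apply iterate_asc | apply Hfl]. }
    exact (proj2 (lub_add (fun _ => inx x) _ _ _ (fun _ => le_refl _) A1 (lub_const (inx x)) B1)).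
Qed.

Lemma kleene inx : exists fl, least_flow inx fl /\
  forall x, lubc (fun n => iterate inx n x) (fl x).
Proof.
  assert (Hc : forall x, {l | lubc (fun n => iterate inx n x) l}).
  { intro x. apply constructive_indefinite_description.
    exact (fm_chain_lub FM (iterate_asc inx x)). }
  set (fl := fun x => proj1_sig (Hc x)).
  assert (Hfl : forall x, lubc (fun n => iterate inx n x) (fl x))
    by (intro x; exact (proj2_sig (Hc x))).
  exists fl. split; [split|exact Hfl].
  - now apply lub_iterates_solves.
  - intros g Hg x Hx. apply (proj2 (Hfl x)). intros s [i ->].
    now apply iterate_le_solution.
Qed.

Lemma path_le_outflow inx fl z : flow_eq FM X E inx fl ->
  forall rest v a, In v X -> (forall w, In w rest -> In w X) -> a <=. fl v ->
  epath E v rest z a <=. E (last (v :: rest) v) z (fl (last (v :: rest) v)).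
Proof.
  intros Hfe. induction rest as [|x1 r IH]; intros v a Hv Hr Ha.
  - simpl. now apply dist_mono; [apply E_dist|].
  - assert (Hx1 : In x1 X) by (apply Hr; now left).
    change (epath E x1 r z (E v x1 a) <=. E (last (x1 :: r) v) z (fl (last (x1 :: r) v))).
    rewrite (last_indep r x1 v x1). apply IH; [exact Hx1 | intros; apply Hr; now right|].
    apply le_trans with (E v x1 (fl v)); [now apply dist_mono; [apply E_dist|]|].
    rewrite (Hfe x1 Hx1). apply le_trans with (2 := le_addl _ _).
    apply (lsum_summand (fun w => E w x1 (fl w)) X v Hv).
Qed.

Lemma path_contribution_le_outflow inx fl v rest y z :
  flow_eq FM X E inx fl -> is_path X v rest y z -> epath E v rest z (inx v) <=. E y z (fl y).
Proof.
  intros Hfe (Hv & Hr & Hy & _). rewrite <- Hy.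
  apply (path_le_outflow inx fl z Hfe rest v (inx v) Hv Hr).
  rewrite (Hfe v Hv). apply le_addr.
Qed.

Definition path_bound (inx : nat -> M) (y z : nat) (u : M) : Prop :=
  forall v rest, is_path X v rest y z -> epath E v rest z (inx v) <=. u.

(* Propagating the n-th iterate along a path to (y,z) is a finite sum of
   path contributions, so it is below any path bound. *)
Lemma iterate_path_le inx y z u : ~ In z X -> path_bound inx y z u ->
  forall n rest v, In v X -> (forall w, In w rest -> In w X) -> last (v :: rest) v = y ->
  epath E v rest z (iterate inx n v) <=. u.
Proof.
  intros Hz Hq n. induction n; intros rest v Hv Hr Hl;
    pose proof (epath_dist z rest v Hv Hr) as Hd.
  - change (epath E v rest z 0 <=. u). rewrite (proj2 Hd). apply le_0.
  - simpl. rewrite (proj1 Hd), (dist_lsum _ Hd), map_map. apply le_join.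
    + apply Hq. repeat split; auto.
    + apply lsum_ub. intros w Hw.
      change (epath E w (v :: rest) z (iterate inx n w) <=. u).
      apply IHn; [exact Hw | intros w' [<-|H]; auto |].
      change (last (v :: rest) w = y). now rewrite (last_indep rest v w v).
Qed.

Lemma outflow_le_path_bound inx fl y z u : least_flow inx fl -> In y X -> ~ In z X ->
  path_bound inx y z u -> E y z (fl y) <=. u.
Proof.
  intros [_ Hmin] Hy Hz Hq.
  destruct (kleene inx) as [fk [[Hfk _] Hlub]].
  apply le_trans with (E y z (fk y)); [apply dist_mono; auto|].
  apply (proj2 (E_cont y z Hy _ _ (iterate_asc inx y) (Hlub y))). intros s [n ->].
  exact (iterate_path_le inx y z u Hz Hq n [] y Hy (fun _ H => match H with end) eq_refl).
Qed.

Definition point_inflow (x : nat) (m : M) (x' : nat) : M :=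
  if Nat.eq_dec x' x then m else 0.

Lemma single_source_outflow x m fl y z : least_flow (point_inflow x m) fl ->
  In x X -> In y X -> ~ In z X ->
  is_sum FM (fun r => is_path X x r y z) (fun r => epath E x r z m) (E y z (fl y)).
Proof.
  intros Hfl Hx Hy Hz.
  assert (Hm : point_inflow x m x = m)
    by (unfold point_inflow; destruct (Nat.eq_dec x x); congruence).
  split.
  - intros s [L [_ [HL ->]]]. apply lsum_ub. intros r Hr. rewrite <- Hm.
    exact (path_contribution_le_outflow _ fl x r y z (proj1 Hfl) (HL r Hr)).
  - intros u Hu. apply (outflow_le_path_bound _ fl y z u Hfl Hy Hz).
    intros v rest Hp. unfold point_inflow. destruct (Nat.eq_dec v x) as [->|Hvx].
    + apply le_trans with (lsum FM (map (fun r => epath E x r z m) [rest]));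
        [apply le_addr|].
      apply Hu. exists [rest]. split; [|split; [|reflexivity]].
      * constructor; [intros []|constructor].
      * now intros r [<-|[]].
    + destruct Hp as (Hv & Hr & _). rewrite (proj2 (epath_dist z rest v Hv Hr)). apply le_0.
Qed.

End Flows.

(* An external node inflow realising a single-source node inflow. *)
Definition point_edge_inflow (x z0 : nat) (m : M) (y' x' : nat) : M :=
  if Nat.eq_dec y' z0 then point_inflow x m x' else 0.

Lemma point_edge_inflow_sum X x z0 m x' : ~ In z0 X ->
  is_sum FM (fun y' => ~ In y' X) (fun y' => point_edge_inflow x z0 m y' x')
    (point_inflow x m x').
Proof.
  intros Hz0. split.
  - intros s [L [_ [_ ->]]]. apply lsum_ub. intros a _. unfold point_edge_inflow.
    destruct (Nat.eq_dec a z0); [apply le_refl | apply le_0].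
  - intros u Hu. apply le_trans with (lsum FM (map (fun y' => point_edge_inflow x z0 m y' x') [z0])).
    + simpl. unfold point_edge_inflow at 1. destruct (Nat.eq_dec z0 z0); [apply le_addr|congruence].
    + apply Hu. exists [z0]. repeat split; [constructor; [intros []|constructor]|].
      now intros a [<-|[]].
Qed.

Lemma fresh_node (X : list nat) : exists z0, ~ In z0 X.
Proof.
  assert (Hb : exists n, forall a, In a X -> a < n).
  { induction X as [|b L [n Hn]]; [exists 0%nat; intros a []|].
    exists (S (b + n)). intros a [<-|H]; [lia | specialize (Hn a H); lia]. }
  destruct Hb as [n Hn]. exists n. intro H. specialize (Hn n H). lia.
Qed.

Section Equivalence.
Variable X : list nat.
Variables E1 E2 : nat -> nat -> M -> M.
Hypothesis HE1 : forall x y, In x X -> continuous FM (E1 x y) /\ distributive FM (E1 x y).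
Hypothesis HE2 : forall x y, In x X -> continuous FM (E2 x y) /\ distributive FM (E2 x y).

Let D1 a b (H : In a X) := proj2 (HE1 a b H).
Let D2 a b (H : In a X) := proj2 (HE2 a b H).
Let C1 a b (H : In a X) := proj1 (HE1 a b H).
Let C2 a b (H : In a X) := proj1 (HE2 a b H).

(* Equal transfer functions yield full path replacement: replace a path by
   the set of all paths with the same endpoints, whose sum is the outflow of
   h2 under a single-source inflow. *)
Lemma tf_eq_full_path_replacement :
  tf_eq FM X E1 E2 -> full_path_replacement FM X E1 E2.
Proof.
  intros Htf x y z rest Hx Hy Hz Hp.
  destruct (fresh_node X) as [z0 Hz0].
  assert (Hk : forall (E : nat -> nat -> M -> M) m,
    (forall a b, In a X -> distributive FM (E a b)) ->
    (forall a b, In a X -> continuous FM (E a b)) ->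
    {fl | least_flow X E (point_inflow x m) fl}).
  { intros E m HD HC. apply constructive_indefinite_description.
    destruct (kleene X E HD HC (point_inflow x m)) as [fl [Hfl _]]. now exists fl. }
  set (fl1 := fun m => proj1_sig (Hk E1 m D1 C1)).
  set (fl2 := fun m => proj1_sig (Hk E2 m D2 C2)).
  assert (Hflow : forall E m fl, least_flow X E (point_inflow x m) fl ->
    is_flow FM X E (point_edge_inflow x z0 m) fl).
  { intros E m fl [Hfe Hmin]. exists (point_inflow x m).
    split; [intros; now apply point_edge_inflow_sum | split; assumption]. }
  exists (fun r => is_path X x r y z). split; [tauto|].
  exists (fun m => E2 y z (fl2 m y)). split.
  - intro m. exact (single_source_outflow X E2 D2 C2 x m _ y z (proj2_sig (Hk E2 m D2 C2)) Hx Hy Hz).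
  - intro m.
    rewrite <- (Htf (point_edge_inflow x z0 m) (fl1 m) (fl2 m)); auto;
      [|apply Hflow; exact (proj2_sig (Hk _ m _ _)) ..].
    assert (Hm : point_inflow x m x = m)
      by (unfold point_inflow; destruct (Nat.eq_dec x x); congruence).
    rewrite <- Hm at 1.
    exact (path_contribution_le_outflow X E1 D1 _ _ x rest y z
             (proj1 (proj2_sig (Hk E1 m D1 C1))) Hp).
Qed.

Lemma full_path_replacement_outflow_le :
  full_path_replacement FM X E1 E2 -> forall inf fl1 fl2,
  is_flow FM X E1 inf fl1 -> is_flow FM X E2 inf fl2 ->
  forall y z, In y X -> ~ In z X -> E1 y z (fl1 y) <=. E2 y z (fl2 y).
Proof.
  intros Hfpr inf fl1 fl2 [i1 [Hs1 Hl1]] [i2 [Hs2 [He2 _]]] y z Hy Hz.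
  assert (Hi : forall v, In v X -> i1 v = i2 v)
    by (intros v Hv; exact (lub_unique _ _ _ (Hs1 v Hv) (Hs2 v Hv))).
  apply (outflow_le_path_bound X E1 D1 C1 i1 fl1 y z _ Hl1 Hy Hz).
  intros v rest Hp. pose proof Hp as (Hv & _).
  destruct (Hfpr v y z rest Hv Hy Hz Hp) as [P [HP [EP [HEP Hle]]]].
  apply le_trans with (EP (i1 v)); [apply Hle|].
  apply (proj2 (HEP (i1 v))). intros s [L [_ [HL ->]]].
  apply lsum_ub. intros r Hr. rewrite (Hi v Hv).
  exact (path_contribution_le_outflow X E2 D2 i2 fl2 v r y z He2 (HP r (HL r Hr))).
Qed.

End Equivalence.
End FlowMonoid.

Theorem lemma7 (M : Type) (FM : flow_monoid M) (Hidem : idempotent_add FM)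
  (X : list nat) (HX : NoDup X) (E1 E2 : nat -> nat -> M -> M)
  (HE1 : forall x y, In x X -> continuous FM (E1 x y) /\ distributive FM (E1 x y))
  (HE2 : forall x y, In x X -> continuous FM (E2 x y) /\ distributive FM (E2 x y)) :
  tf_eq FM X E1 E2 <->
  full_path_replacement FM X E1 E2 /\ full_path_replacement FM X E2 E1.
Proof.
  split.
  - intro Htf. split; apply (tf_eq_full_path_replacement M FM Hidem X); auto.
    intros inf fl1 fl2 H1 H2 x y Hx Hy. symmetry. exact (Htf inf fl2 fl1 H2 H1 x y Hx Hy).
  - intros [H12 H21] inf fl1 fl2 Hf1 Hf2 x y Hx Hy.
    apply (fm_antisym FM).
    + exact (full_path_replacement_outflow_le M FM Hidem X E1 E2 HE1 HE2 H12 inf _ _ Hf1 Hf2 x y Hx Hy).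
    + exact (full_path_replacement_outflow_le M FM Hidem X E2 E1 HE2 HE1 H21 inf _ _ Hf2 Hf1 x y Hx Hy).
Qed.
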